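(* Let $t_1,\dots,t_n,s_1,\dots,s_n>0$. Then $(K^n,|\cdot|_{t_1}\times\cdots\times|\cdot|_{t_n})$ and $(K^n,|\cdot|_{s_1}\times\cdots\times|\cdot|_{s_n})$ are isometrically isomorphic if and only if, after a suitable permutation of $s_1,\dots,s_n$, one has $t_i/s_i\in V_K$ for each $i=1,\dots,n$.
   Context: $K$ is a complete non-archimedean non-trivially valued field which is not spherically complete, with valuation group $V_K=\{|x|:x\in K\setminus\{0\}\}$. $(K^n,|\cdot|_{t_1}\times\cdots\times|\cdot|_{t_n})$ denotes $K^n$ with norm $\|(x_1,\dots,x_n)\|=\max_it_i|x_i|$. *)

From HB Require Import structures.
From mathcomp Require Import all_boot all_order all_algebra all_fingroup.
From mathcomp Require Import reals.
Set Implicit Arguments. Unset Strict Implicit. Unset Printing Implicit Defensive.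
Import Order.TTheory GRing.Theory Num.Theory.
Local Open Scope ring_scope.

Definition nonarch_abs (R : realType) (K : fieldType) (abs : K -> R) : Prop :=
  [/\ forall x : K, 0 <= abs x,
      forall x : K, abs x = 0 <-> x = 0,
      forall x y : K, abs (x * y) = abs x * abs y &
      forall x y : K, abs (x + y) <= Num.max (abs x) (abs y)].

Definition nontrivial_abs (R : realType) (K : fieldType) (abs : K -> R) : Prop :=
  exists x : K, abs x != 0 /\ abs x != 1.

Definition abs_cauchy (R : realType) (K : fieldType) (abs : K -> R)
  (u : nat -> K) : Prop :=
  forall e : R, 0 < e -> exists N : nat, forall m k : nat,
    (N <= m)%N -> (N <= k)%N -> abs (u m - u k) < e.

Definition abs_converges (R : realType) (K : fieldType) (abs : K -> R)
  (u : nat -> K) : Prop :=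
  exists l : K, forall e : R, 0 < e -> exists N : nat, forall m : nat,
    (N <= m)%N -> abs (u m - l) < e.

Definition abs_complete (R : realType) (K : fieldType) (abs : K -> R) : Prop :=
  forall u : nat -> K, abs_cauchy abs u -> abs_converges abs u.

Definition cball (R : realType) (K : fieldType) (abs : K -> R) (c : K) (r : R)
  : pred K := fun x => abs (x - c) <= r.

Definition spherically_complete (R : realType) (K : fieldType) (abs : K -> R)
  : Prop :=
  forall (c : nat -> K) (r : nat -> R),
    (forall k, 0 < r k) ->
    (forall k x, cball abs (c k.+1) (r k.+1) x -> cball abs (c k) (r k) x) ->
    exists x : K, forall k, cball abs (c k) (r k) x.

Definition value_group (R : realType) (K : fieldType) (abs : K -> R) (v : R)
  : Prop := exists x : K, x != 0 /\ abs x = v.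

(* the norm of (K^n, |.|_{t_1} x ... x |.|_{t_n}) : max_i t_i |x_i| *)
Definition wnorm (R : realType) (K : fieldType) (abs : K -> R) (n : nat)
  (t : 'I_n -> R) (x : 'rV[K]_n) : R :=
  \big[Num.max/0]_(i < n) (t i * abs (x ord0 i)).

Definition isometrically_isomorphic (R : realType) (K : fieldType)
  (abs : K -> R) (n : nat) (t s : 'I_n -> R) : Prop :=
  exists f : 'rV[K]_n -> 'rV[K]_n,
    [/\ forall (a : K) (x y : 'rV[K]_n), f (a *: x + y) = a *: f x + f y,
        bijective f &
        forall x, wnorm abs s (f x) = wnorm abs t x].

From HB Require Import structures.
From mathcomp Require Import all_boot all_order all_algebra all_fingroup.
From mathcomp Require Import reals boolp ring.
Import Order.TTheory GRing.Theory Num.Theory.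
Local Open Scope ring_scope.
Set Implicit Arguments. Unset Strict Implicit.

(* For r > 0 let N_t(r) be the number of indices i with r / t_i in V_K.  The
   basis vectors scaled to t-norm r at these N_t(r) indices stay "residually
   independent": every combination with coefficients in the unit ball, one of
   them a unit, still has t-norm r.  In the s-norm only the N_s(r) coordinates
   whose weight lies in the class of r can reach the value r, and on those the
   question is linear dependence over the residue field.  Hence an isometry
   forces N_t(r) <= N_s(r), so N_t = N_s by symmetry, and equal class counts
   give the permutation.  Conversely, if |a_i| = t_i / s_sigma(i), then
   x |-> (a_i x_i) permuted by sigma is an isometry. *)

Lemma linear_sumZ (K : fieldType) (V W : lmodType K) (f : V -> W) (lin : linear f)
  (J : finType) (A : {pred J}) (b : J -> K) (x : J -> V) :
  f (\sum_(j in A) b j *: x j) = \sum_(j in A) b j *: f (x j).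
Proof.
pose fL : {linear V -> W} := HB.pack f (GRing.isLinear.Build _ _ _ _ f lin).
by rewrite -[f]/(fL : V -> W) linear_sum; apply: eq_bigr => j _; rewrite linearZ.
Qed.

Lemma mx_sumZE (K : pzRingType) (n : nat) (J : finType) (A : {pred J}) (b : J -> K)
  (x : J -> 'rV[K]_n) i :
  (\sum_(j in A) b j *: x j) ord0 i = \sum_(j in A) b j * x j ord0 i.
Proof. by rewrite summxE; apply: eq_bigr => j _; rewrite mxE. Qed.

Lemma perm_of_card_fibres (T : eqType) (n : nat) (u v : 'I_n -> T) :
  (forall i, #|[set k | u k == u i]| = #|[set k | v k == u i]|) ->
  (forall i, #|[set k | u k == v i]| = #|[set k | v k == v i]|) ->
  exists p : 'S_n, forall i, u i = v (p i).
Proof.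
move=> Hu Hv.
have count_tuple w x : count_mem x [tuple w i | i < n] = #|[set i | w i == x]|.
  by rewrite cardsE cardE /enum_mem size_filter /= count_map -enumT; apply: eq_count.
have : perm_eq [tuple u i | i < n] [tuple v i | i < n].
  apply/allP => x; rewrite mem_cat => /orP[] /tnthP[i ->];
  by rewrite !tnth_mktuple /= !count_tuple ?Hu ?Hv.
case/tuple_permP => p /val_inj e; exists p => i.
by have := congr1 (fun w => tnth w i) e; rewrite !tnth_mktuple.
Qed.

Section Ultrametric.
Variables (R : realType) (K : fieldType) (abs : K -> R).
Hypothesis Habs : nonarch_abs abs.

Lemma abs_ge0 x : 0 <= abs x. Proof. by case: Habs. Qed.
Lemma abs_eq0 x : (abs x == 0) = (x == 0).
Proof. by case: Habs => _ eq0 _ _; apply/eqP/eqP => /eq0. Qed.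
Lemma absM x y : abs (x * y) = abs x * abs y. Proof. by case: Habs. Qed.
Lemma absD_le_max x y : abs (x + y) <= Num.max (abs x) (abs y).
Proof. by case: Habs. Qed.

Lemma abs0 : abs 0 = 0. Proof. by apply/eqP; rewrite abs_eq0. Qed.

Lemma abs_gt0 x : (0 < abs x) = (x != 0).
Proof. by rewrite lt_neqAle abs_ge0 andbT eq_sym abs_eq0. Qed.

Lemma abs1 : abs 1 = 1.
Proof.
have abs1_neq0 : abs 1 != 0 by rewrite abs_eq0 oner_eq0.
by apply: (mulfI abs1_neq0); rewrite -absM !mulr1.
Qed.

Lemma absV x : abs x^-1 = (abs x)^-1.
Proof.
have [->|x0] := eqVneq x 0; first by rewrite invr0 abs0 invr0.
by apply: (mulfI (x := abs x)); rewrite ?abs_eq0 // -absM !divff ?abs_eq0 ?abs1.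
Qed.

Lemma absN x : abs (- x) = abs x.
Proof.
suff absN1 : abs (-1) = 1 by rewrite -mulN1r absM absN1 mul1r.
have : abs (-1) ^+ 2 = 1 by rewrite expr2 -absM mulrNN mulr1 abs1.
move/eqP; rewrite sqrf_eq1 => /orP[/eqP //|/eqP absN1].
by have := abs_ge0 (-1); rewrite absN1 ler0N1.
Qed.

Lemma absB_le_max x y : abs (x - y) <= Num.max (abs x) (abs y).
Proof. by rewrite -(absN y) absD_le_max. Qed.

Lemma abs_sum_le (I : Type) (r : seq I) (P : pred I) (F : I -> K) (M : R) :
  0 <= M -> (forall i, P i -> abs (F i) <= M) -> abs (\sum_(i <- r | P i) F i) <= M.
Proof.
move=> M_ge0 F_le; elim/big_ind: _ => //; first by rewrite abs0.
by move=> x y x_le y_le; apply: le_trans (absD_le_max x y) _; rewrite ge_max x_le.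
Qed.

Lemma abs_sum_lt (I : Type) (r : seq I) (P : pred I) (F : I -> K) (M : R) :
  0 < M -> (forall i, P i -> abs (F i) < M) -> abs (\sum_(i <- r | P i) F i) < M.
Proof.
move=> M_gt0 F_lt; elim/big_ind: _ => //; first by rewrite abs0.
by move=> x y x_lt y_lt; apply: le_lt_trans (absD_le_max x y) _; rewrite gt_max x_lt.
Qed.

Section ResidualDependence.
Variables (I J : finType).
Implicit Types (A : {set J}) (P : {set I}) (y : J -> I -> K).

(* Modulo the maximal ideal, the columns [y j] (j in A), restricted to the rows
   in P, are linearly dependent over the residue field. *)
Definition residually_dependent A P y : Prop :=
  exists b : J -> K, [/\ {in A, forall j, abs (b j) <= 1},
    exists2 j, j \in A & abs (b j) = 1 &
    {in P, forall i, abs (\sum_(j in A) b j * y j i) < 1}].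

Lemma residually_dependent0 A y : A != set0 -> residually_dependent A set0 y.
Proof.
case/set0Pn => j0 j0A; exists (fun j => (j == j0)%:R); split => //.
- by move=> j _; case: eqP; rewrite ?abs1 ?abs0 ?ler01.
- by exists j0; rewrite ?eqxx ?abs1.
- by move=> i; rewrite inE.
Qed.

Lemma residually_dependent_small_row A P y i0 :
  {in A, forall j, abs (y j i0) < 1} ->
  residually_dependent A (P :\ i0) y -> residually_dependent A P y.
Proof.
move=> y_lt1 [b [b_le1 b_unit b_lt1]]; exists b; split=> // i iP.
have [->|i_neq0] := eqVneq i i0; last by apply: b_lt1; rewrite in_setD1 i_neq0.
apply: abs_sum_lt => [|j jA]; first exact: ltr01.
rewrite absM; apply: le_lt_trans (y_lt1 j jA).
by rewrite ler_piMl ?abs_ge0 ?b_le1.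
Qed.

Lemma residually_dependent_pivot A P y j0 i0 :
  j0 \in A -> abs (y j0 i0) = 1 -> {in A, forall j, abs (y j i0) <= 1} ->
  residually_dependent (A :\ j0) (P :\ i0)
    (fun j i => y j i - y j i0 / y j0 i0 * y j0 i) ->
  residually_dependent A P y.
Proof.
move=> j0A pivot col_le1 [b [b_le1 [j1 j1A b_j1] b_lt1]].
have pivot_neq0 : y j0 i0 != 0 by rewrite -abs_eq0 pivot oner_eq0.
pose c := - \sum_(j in A :\ j0) b j * (y j i0 / y j0 i0).
exists (fun j => if j == j0 then c else b j); split.
- move=> j jA; case: eqP => [_|/eqP j_neq0]; last by rewrite b_le1 // in_setD1 j_neq0.
  rewrite absN; apply: abs_sum_le => [|k kA']; first exact: ler01.
  have kA : k \in A by move: kA'; rewrite in_setD1 => /andP[].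
  by rewrite !absM absV pivot invr1 mulr1 mulr_ile1 ?abs_ge0 ?b_le1 ?col_le1.
- exists j1; first by move: j1A; rewrite in_setD1 => /andP[].
  by move: j1A; rewrite in_setD1 => /andP[/negPf ->].
have combinationE i : \sum_(j in A) (if j == j0 then c else b j) * y j i =
    \sum_(j in A :\ j0) b j * (y j i - y j i0 / y j0 i0 * y j0 i).
  rewrite (bigD1 j0) //= eqxx.
  rewrite (eq_bigl (fun j => j \in A :\ j0)); last by move=> j; rewrite in_setD1 andbC.
  rewrite (eq_bigr (fun j => b j * y j i)); last first.
    by move=> j; rewrite in_setD1 => /andP[/negPf ->].
  under [RHS]eq_bigr do rewrite mulrBr.
  rewrite big_split /= sumrN /c mulNr mulr_suml addrC; congr (_ - _).
  by apply: eq_bigr => k _; rewrite !mulrA.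
move=> i iP; rewrite combinationE; have [->|i_neq0] := eqVneq i i0.
  by rewrite big1 ?abs0 ?ltr01 // => j _; rewrite divfK // subrr mulr0.
by apply: b_lt1; rewrite in_setD1 i_neq0.
Qed.

Lemma residually_dependent_card A P y :
  (#|P| < #|A|)%N -> {in A & P, forall j i, abs (y j i) <= 1} ->
  residually_dependent A P y.
Proof.
have [p] := ubnP #|P|; elim: p => // p IH in A P y *; rewrite ltnS => P_le ltPA y_le1.
have [->|/set0Pn[i0 i0P]] := eqVneq P set0.
  by apply: residually_dependent0; rewrite -card_gt0 (leq_ltn_trans _ ltPA).
have cardP : #|P| = #|P :\ i0|.+1 by rewrite (cardsD1 i0) i0P.
have sub_row i : i \in P :\ i0 -> i \in P by rewrite in_setD1 => /andP[].
have [/existsP[j0 /andP[j0A /eqP pivot]]|no_pivot] :=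
  boolP [exists j in A, abs (y j i0) == 1].
- apply: (residually_dependent_pivot j0A pivot) => [j jA|]; first exact: y_le1.
  have cardA : #|A| = #|A :\ j0|.+1 by rewrite (cardsD1 j0) j0A.
  apply: IH => [|| j i]; first by rewrite -ltnS -cardP.
    by rewrite -ltnS -cardP -cardA.
  rewrite !in_setD1 => /andP[_ jA] /andP[_ iP].
  apply: le_trans (absB_le_max _ _) _; rewrite ge_max y_le1 //=.
  by rewrite !absM absV pivot invr1 mulr1 mulr_ile1 ?abs_ge0 ?y_le1.
- apply: (residually_dependent_small_row (i0 := i0)) => [j jA|].
    rewrite lt_neqAle y_le1 // andbT; apply: contraNneq no_pivot => y_eq1.
    by apply/existsP; exists j; rewrite jA y_eq1 /=.
  apply: IH => [|| j i jA /sub_row]; last exact: y_le1.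
    by rewrite -ltnS -cardP.
  by rewrite (leq_ltn_trans _ ltPA) // -ltnS -cardP.
Qed.

End ResidualDependence.

Lemma value_group_gt0 v : value_group abs v -> 0 < v.
Proof. by case=> x [x_neq0 <-]; rewrite abs_gt0. Qed.

Lemma value_group1 : value_group abs 1.
Proof. by exists 1; rewrite oner_neq0 abs1. Qed.

Lemma value_groupM u v :
  value_group abs u -> value_group abs v -> value_group abs (u * v).
Proof.
by case=> [x [x_neq0 <-]] [y [y_neq0 <-]]; exists (x * y); rewrite mulf_neq0 ?absM.
Qed.

Lemma value_groupV v : value_group abs v -> value_group abs v^-1.
Proof. by case=> [x [x_neq0 <-]]; exists x^-1; rewrite invr_neq0 ?absV. Qed.

Lemma value_group_choice (I : finType) (S : {pred I}) (u : I -> R) :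
  {in S, forall i, value_group abs (u i)} ->
  exists c : I -> K, {in S, forall i, c i != 0 /\ abs (c i) = u i}.
Proof.
move=> uV; apply: (fin_all_exists (P := fun i ci => i \in S -> ci != 0 /\ abs ci = u i)).
move=> i; have [/uV[x x_spec]|_] := boolP (i \in S); first by exists x.
by exists 0.
Qed.

Definition vequiv (a b : R) : bool := `[< value_group abs (a / b) >].

Lemma vequivP a b : reflect (value_group abs (a / b)) (vequiv a b).
Proof. exact: asboolP. Qed.

Lemma vequiv_refl a : a != 0 -> vequiv a a.
Proof. by move=> a_neq0; apply/vequivP; rewrite divff //; apply: value_group1. Qed.

Lemma vequivC a b : vequiv a b = vequiv b a.
Proof.
by apply/vequivP/vequivP => /value_groupV; rewrite invf_div.
Qed.

Lemma vequiv_neq0 a b : vequiv a b -> b != 0.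
Proof.
by move=> /vequivP/value_group_gt0; apply: contraTneq => ->; rewrite invr0 mulr0 ltxx.
Qed.

Lemma vequiv_trans b a c : vequiv a b -> vequiv b c -> vequiv a c.
Proof.
move=> ab bc; have b_neq0 := vequiv_neq0 ab; apply/vequivP.
have -> : a / c = (a / b) * (b / c) by rewrite mulrA divfK.
by apply: value_groupM; apply/vequivP.
Qed.

Definition vrep (a : R) : R := choose (vequiv a) a.

Lemma vequiv_vrep a : a != 0 -> vequiv a (vrep a).
Proof. by move=> a_neq0; apply/chooseP/vequiv_refl. Qed.

Lemma vrep_eq a b : vequiv a b -> vrep a = vrep b.
Proof.
move=> ab; have ba : vequiv b a by rewrite vequivC.
rewrite /vrep (@eq_choose _ _ (vequiv b)) => [|c]; last first.
  by apply/idP/idP; apply: vequiv_trans.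
by apply: choose_id => //; apply/vequiv_refl/(vequiv_neq0 ab).
Qed.

Lemma vrep_eqE a b : a != 0 -> b != 0 -> (vrep a == vrep b) = vequiv a b.
Proof.
move=> a_neq0 b_neq0; apply/eqP/idP => [eq_rep|]; last exact: vrep_eq.
apply: (vequiv_trans (vequiv_vrep a_neq0)).
by rewrite eq_rep vequivC vequiv_vrep.
Qed.

Section WeightedNorm.
Variable n : nat.
Implicit Types (s : 'I_n -> R) (x : 'rV[K]_n).

Lemma wnorm_ge_coord s x i : s i * abs (x ord0 i) <= wnorm abs s x.
Proof. exact: le_bigmax. Qed.

Lemma wnorm_ge0 s x : 0 <= wnorm abs s x.
Proof. exact: bigmax_ge_id. Qed.

Lemma wnorm_le s x r :
  0 <= r -> (forall i, s i * abs (x ord0 i) <= r) -> wnorm abs s x <= r.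
Proof. by move=> r_ge0 coord_le; apply: bigmax_le => // i _; apply: coord_le. Qed.

Lemma wnorm_lt s x r :
  0 < r -> (forall i, s i * abs (x ord0 i) < r) -> wnorm abs s x < r.
Proof. by move=> r_gt0 coord_lt; apply: bigmax_lt => // i _; apply: coord_lt. Qed.

Definition vclass_coords s r : {set 'I_n} := [set i | vequiv r (s i)].

Lemma coord_lt_off_vclass s x r i :
  0 < r -> 0 < s i -> i \notin vclass_coords s r -> wnorm abs s x <= r ->
  s i * abs (x ord0 i) < r.
Proof.
move=> r_gt0 s_gt0 i_off x_le; rewrite lt_neqAle (le_trans (wnorm_ge_coord s x i)) //.
rewrite andbT; apply: contraNneq i_off => coord_eq; rewrite inE; apply/vequivP.
exists (x ord0 i); rewrite -abs_gt0 -coord_eq.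
split; first by move: r_gt0; rewrite -coord_eq pmulr_rgt0.
by rewrite mulrC mulKf ?gt_eqF.
Qed.

End WeightedNorm.

Lemma wnorm_small_combination (n : nat) (s : 'I_n -> R) (r : R)
    (J : finType) (A : {set J}) (x : J -> 'rV[K]_n) :
  (forall i, 0 < s i) -> 0 < r ->
  {in A, forall j, wnorm abs s (x j) <= r} -> (#|vclass_coords s r| < #|A|)%N ->
  exists b : J -> K, [/\ {in A, forall j, abs (b j) <= 1},
    exists2 j, j \in A & abs (b j) = 1 &
    wnorm abs s (\sum_(j in A) b j *: x j) < r].
Proof.
move=> s_gt0 r_gt0 x_le ltA.
have [c c_spec] : exists c : 'I_n -> K,
    {in vclass_coords s r, forall i, c i != 0 /\ abs (c i) = r / s i}.
  by apply: value_group_choice => i; rewrite inE => /vequivP.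
pose y j i := x j ord0 i / c i.
have [b [b_le1 b_unit b_lt1]] : residually_dependent A (vclass_coords s r) y.
  apply: residually_dependent_card => // j i jA iS; have [c_neq0 c_abs] := c_spec i iS.
  rewrite absM absV c_abs invf_div mulrA ler_pdivrMr // mul1r mulrC.
  exact: le_trans (wnorm_ge_coord s _ i) (x_le j jA).
exists b; split=> //; apply: wnorm_lt => // i; rewrite mx_sumZE.
have [iS|i_off] := boolP (i \in vclass_coords s r).
  have [c_neq0 c_abs] := c_spec i iS.
  have -> : \sum_(j in A) b j * x j ord0 i = c i * \sum_(j in A) b j * y j i.
    by rewrite mulr_sumr; apply: eq_bigr => j _; rewrite /y mulrCA [c i * _]mulrC divfK.
  rewrite absM c_abs mulrA mulrCA divff ?gt_eqF // mulr1.
  by rewrite -[X in _ < X]mulr1 ltr_pM2l // b_lt1.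
rewrite mulrC -ltr_pdivlMr //; apply: abs_sum_lt => [|j jA]; first exact: divr_gt0.
rewrite ltr_pdivlMr // mulrC absM.
apply: le_lt_trans (coord_lt_off_vclass _ _ i_off (x_le j jA)) => //.
by rewrite ler_pM2l // ler_piMl ?abs_ge0 ?b_le1.
Qed.

Lemma isometrically_isomorphic_sym (n : nat) (t s : 'I_n -> R) :
  isometrically_isomorphic abs t s -> isometrically_isomorphic abs s t.
Proof.
case=> f [f_lin [g fK gK] f_iso]; exists g; split.
- by move=> a x y; apply: (can_inj fK); rewrite f_lin !gK.
- by exists f.
- by move=> y; rewrite -f_iso gK.
Qed.

Lemma card_vclass_coords_le (n : nat) (t s : 'I_n -> R) (r : R) :
  (forall i, 0 < t i) -> (forall i, 0 < s i) -> 0 < r ->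
  isometrically_isomorphic abs t s ->
  (#|vclass_coords t r| <= #|vclass_coords s r|)%N.
Proof.
move=> t_gt0 s_gt0 r_gt0 [f [f_lin _ f_iso]]; rewrite leqNgt; apply/negP => ltS.
have [a a_spec] : exists a : 'I_n -> K,
    {in vclass_coords t r, forall i, a i != 0 /\ abs (a i) = r / t i}.
  by apply: value_group_choice => i; rewrite inE => /vequivP.
pose e i : 'rV[K]_n := a i *: delta_mx ord0 i.
have eE i k : e i ord0 k = if k == i then a i else 0.
  by rewrite !mxE eqxx /=; case: eqP; rewrite ?mulr1 ?mulr0.
have e_norm_le : {in vclass_coords t r, forall i, wnorm abs s (f (e i)) <= r}.
  move=> i iS; rewrite f_iso; apply: wnorm_le => [|k]; first exact: ltW.
  rewrite eE; case: eqP => [->|_]; last by rewrite abs0 mulr0 ltW.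
  by rewrite (a_spec i iS).2 mulrC divfK ?gt_eqF.
have [b [_ [j1 j1S b_j1] small]] := wnorm_small_combination s_gt0 r_gt0 e_norm_le ltS.
move: small; rewrite -linear_sumZ // f_iso; apply/negP; rewrite -leNgt.
apply: le_trans (wnorm_ge_coord t _ j1); rewrite mx_sumZE (bigD1 j1) //= big1.
  by rewrite addr0 eE eqxx absM b_j1 mul1r (a_spec j1 j1S).2 mulrC divfK ?gt_eqF.
by move=> j /andP[_ j_neq]; rewrite eE eq_sym (negPf j_neq) mulr0.
Qed.

Lemma perm_of_isometrically_isomorphic (n : nat) (t s : 'I_n -> R) :
  (forall i, 0 < t i) -> (forall i, 0 < s i) ->
  isometrically_isomorphic abs t s ->
  exists sigma : 'S_n, forall i, vequiv (t i) (s (sigma i)).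
Proof.
move=> t_gt0 s_gt0 iso.
have vclass_vrep u r : (forall k, 0 < u k) -> 0 < r ->
    [set k | vrep (u k) == vrep r] = vclass_coords u r.
  by move=> u_gt0 r_gt0; apply/setP => k; rewrite !inE vrep_eqE ?gt_eqF // vequivC.
have card_eq r : 0 < r ->
    #|[set k | vrep (t k) == vrep r]| = #|[set k | vrep (s k) == vrep r]|.
  move=> r_gt0; rewrite !vclass_vrep //; apply/eqP; rewrite eqn_leq.
  by rewrite !card_vclass_coords_le //; apply: isometrically_isomorphic_sym.
have [p vrep_p] := @perm_of_card_fibres _ _ (vrep \o t) (vrep \o s)
  (fun i => card_eq _ (t_gt0 i)) (fun i => card_eq _ (s_gt0 i)).
by exists p => i; have /eqP := vrep_p i; rewrite vrep_eqE ?lt0r_neq0.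
Qed.

Lemma isometrically_isomorphic_of_perm (n : nat) (t s : 'I_n -> R) (sigma : 'S_n) :
  (forall i, 0 < s i) -> (forall i, value_group abs (t i / s (sigma i))) ->
  isometrically_isomorphic abs t s.
Proof.
move=> s_gt0 tsV.
have [a a_spec] : exists a : 'I_n -> K,
    {in predT, forall i, a i != 0 /\ abs (a i) = t i / s (sigma i)}.
  by apply: value_group_choice => i _.
have a_neq0 i : a i != 0 by case: (a_spec i isT).
have weight_a i : s (sigma i) * abs (a i) = t i.
  by rewrite (a_spec i isT).2 mulrC divfK ?gt_eqF.
exists (fun x => \row_j (a ((sigma^-1)%g j) * x ord0 ((sigma^-1)%g j))); split.
- by move=> c x y; apply/rowP => j; rewrite !mxE; ring.
- exists (fun y : 'rV[K]_n => \row_i (y ord0 (sigma i) / a i)) => x; apply/rowP => k;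
    rewrite !mxE ?permK ?permKV; first by rewrite mulrC mulKf.
  by rewrite mulrC divfK.
move=> x; apply/le_anti/andP; split; apply: wnorm_le; rewrite ?wnorm_ge0 // => j.
  rewrite mxE absM mulrA -{1}(permKV sigma j) weight_a.
  exact: wnorm_ge_coord.
apply: le_trans (wnorm_ge_coord s _ (sigma j)).
by rewrite mxE permK absM mulrA weight_a.
Qed.

End Ultrametric.

Unset Implicit Arguments.
Set Strict Implicit.

Theorem mainTheorem12 (R : realType) (K : fieldType) (abs : K -> R)
  (Habs : nonarch_abs abs) (Hntriv : nontrivial_abs abs)
  (Hcompl : abs_complete abs) (Hnsph : ~ spherically_complete abs)
  (n : nat) (t s : 'I_n -> R)
  (Ht : forall i, 0 < t i) (Hs : forall i, 0 < s i) :
  isometrically_isomorphic abs t s <->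
  exists sigma : 'S_n, forall i : 'I_n, value_group abs (t i / s (sigma i)).
Proof.
split=> [iso | [sigma tsV]]; last exact: isometrically_isomorphic_of_perm tsV.
have [sigma t_vequiv_s] := perm_of_isometrically_isomorphic Habs Ht Hs iso.
by exists sigma => i; apply/vequivP.
Qed.
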